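(* Let $m>0$, $K\neq 0$ and $H\in\mathbb{R}$, and consider the Schwarzschild metric written in the constant-mean-curvature form described in the context, on the exterior region $r>2m$. Let $\sigma_+$ and $\sigma_-$ be any solutions on $(2m,\infty)$ of the wave phase equations $$\Big(1-\tfrac{2m}{r}\Big)\frac{3}{K}\frac{d\sigma_\pm}{dr}=v\,P^{-1/2}+b_\pm ,$$ with $b_+=+1,\ b_-=-1$ if $K<0$ and $b_+=-1,\ b_-=+1$ if $K>0$. Then: (i) $\sigma_+$ and $\sigma_-$ are strictly monotonic functions of $r$ on $(2m,\infty)$; (ii) $\sigma_+(r)$ has a finite limit as $r\to\infty$ (the outgoing phase coordinate is bounded in the outward direction); (iii) $\sigma_-(r)$ has a finite limit as $r\to 2m^+$, and $d\sigma_-/dr$ remains bounded in magnitude and bounded away from zero on $(2m,R]$ for every $R>2m$, if and only if the naked shift reversal condition holds, i.e. if and only if $3H/K>8m^3$ (equivalently: $H$ and $K$ have the same sign and $(3H/K)^{1/3}>2m$; for $K<0$ this reads $H<\tfrac{8}{3}m^3K$). Consequently, the naked shift reversal condition is necessary and sufficient for the existence of bounded wave phase coordinates on the exterior part of a constant-mean-curvature slice.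
   Context: The spherically symmetric constant-mean-curvature (CMC) slicing of the Schwarzschild spacetime of mass $m$ is given, in coordinates $(t,r,\theta,\varphi)$ with $r$ the areal radius, by the metric $$ds^2=-\Big(1-\tfrac{2m}{r}\Big)dt^2+2vP^{-1/2}\,dt\,dr+r^4P^{-1}dr^2+r^2\,d\Omega^2,$$ where $d\Omega^2$ is the unit round two-sphere metric, $v(r)=Kr^3/3-H$, $P(r)=v^2+(1-2m/r)r^4$, $K$ is the (constant) mean curvature of the slices $t=\text{const}$ and $H$ is a real integration constant. On $r>2m$ one has $P>0$. The wave phase equations above express that $U_\pm=t-\frac{3}{K}\sigma_\pm(r)$ are null functions ($g^{\mu\nu}\partial_\mu U_\pm\partial_\nu U_\pm=0$), so outgoing/ingoing waves move at constant speed in $\sigma_+$/$\sigma_-$. The radial shift vector component of this slicing is $N^r=r^{-4}v\sqrt{P}$; it changes sign at $r_0=(3H/K)^{1/3}$ when $HK>0$, and the ''naked shift reversal condition'' is that this reversal occurs outside the horizon, $r_0>2m$, i.e. $3H/K>8m^3$. *)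

From Stdlib Require Import Reals.
From Coquelicot Require Export Coquelicot.
Open Scope R_scope.

Definition vfun (K H r : R) : R := K * r ^ 3 / 3 - H.

Definition Pfun (m K H r : R) : R := (vfun K H r) ^ 2 + (1 - 2 * m / r) * r ^ 4.

Definition wave_phase_solution (m K H b : R) (sigma : R -> R) : Prop :=
  forall r, 2 * m < r ->
    ex_derive sigma r /\
    (1 - 2 * m / r) * (3 / K) * Derive sigma r = vfun K H r / sqrt (Pfun m K H r) + b.

Definition strictly_monotonic_on_gt (a : R) (f : R -> R) : Prop :=
  (forall x y, a < x -> x < y -> f x < f y) \/
  (forall x y, a < x -> x < y -> f y < f x).

(* Solving the wave phase equation for the derivative gives
   [σ' = K b r^4 / (3 sqrt P (sqrt P - b v))], with a positive denominator on [r > 2m]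
   because [P = v^2 + (r - 2m) r^3 > v^2]; hence [σ±] is strictly monotonic with the sign
   of [K b±].  Let [s = sign K], so [b- = s] and [b+ = -s].  For [σ+] the shift [s v]
   grows like [|K| r^3 / 3], the denominator like [r^6], and [σ+' = O(r^-2)] is
   integrable at infinity.  For [σ-], since [2 (sqrt P - s v) sqrt P = (sqrt P - s v)^2
   + (r - 2m) r^3], the denominator is bounded away from zero near the horizon exactly
   when [s v(2m) < 0], i.e. [3H/K > 8m^3]; otherwise it is [O(r - 2m)] and
   [σ-' >= c / (r - 2m)] is unbounded. *)

From Stdlib Require Import Reals Lra Psatz Classical.
From Coquelicot Require Import Coquelicot.
Open Scope R_scope.

Lemma Derive_pos_strictly_increasing (f : R -> R) (a : R) :
  (forall x, a < x -> ex_derive f x /\ 0 < Derive f x) ->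
  forall x y, a < x -> x < y -> f x < f y.
Proof.
  intros hf x y hx hxy.
  apply (incr_function f a p_infty (Derive f)); simpl; auto.
  - intros z hz _. apply Derive_correct, hf, hz.
  - intros z hz _. apply hf, hz.
Qed.

Lemma Derive_neg_strictly_decreasing (f : R -> R) (a : R) :
  (forall x, a < x -> ex_derive f x /\ Derive f x < 0) ->
  forall x y, a < x -> x < y -> f y < f x.
Proof.
  intros hf x y hx hxy.
  enough (- f x < - f y) by lra.
  apply (Derive_pos_strictly_increasing (fun z => - f z) a); auto.
  intros z hz. destruct (hf z hz) as [hex hneg]. split.
  - apply (ex_derive_opp f z hex).
  - rewrite Derive_opp. lra.
Qed.

Lemma increment_le_of_is_derive_le (f g df dg : R -> R) (x y : R) : x <= y ->
  (forall z, x <= z <= y -> is_derive f z (df z) /\ is_derive g z (dg z) /\ dg z <= df z) ->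
  g y - g x <= f y - f x.
Proof.
  intros hxy hz.
  destruct (Req_dec x y) as [<-|hne]; [lra|].
  destruct (MVT_cor2 (fun t => f t - g t) (fun t => df t - dg t) x y)
    as [c [hmvt hc]]; [lra| |].
  - intros c hc. destruct (hz c hc) as [hf [hg _]].
    apply is_derive_Reals, (is_derive_minus f g); assumption.
  - destruct (hz c ltac:(lra)) as [_ [_ hle]]. nra.
Qed.

Lemma glb_approx (E : R -> Prop) (x0 lb : R) :
  E x0 -> (forall x, E x -> lb <= x) ->
  exists l, (forall x, E x -> l <= x) /\
            (forall eps, 0 < eps -> exists x, E x /\ x < l + eps).
Proof.
  intros hx0 hlb.
  destruct (completeness (fun y => E (- y))) as [u [hub hleast]].
  - exists (- lb). intros y hy. specialize (hlb _ hy). lra.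
  - exists (- x0). rewrite Ropp_involutive. exact hx0.
  - exists (- u). split.
    + intros x hx. enough (- x <= u) by lra.
      apply hub. rewrite Ropp_involutive. exact hx.
    + intros eps heps. apply NNPP. intros hno.
      enough (u <= u - eps) by lra.
      apply hleast. intros y hy. apply Rnot_lt_le. intros hlt.
      apply hno. exists (- y). split; [exact hy|lra].
Qed.

Lemma decreasing_bounded_below_has_limit (f : R -> R) (a lb : R) :
  (forall x y, a <= x -> x < y -> f y <= f x) -> (forall x, a <= x -> lb <= f x) ->
  exists L, is_lim f p_infty (Finite L).
Proof.
  intros hdec hlb.
  destruct (glb_approx (fun z => exists x, a <= x /\ z = f x) (f a) lb)
    as [l [hl happrox]].
  - exists a. split; [lra|reflexivity].
  - intros z [x [hx ->]]. auto.
  - exists l. apply is_lim_spec. intros eps.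
    destruct (happrox eps (cond_pos eps)) as [_ [[x0 [hx0 ->]] hlt]].
    exists x0. intros y hy.
    assert (l <= f y) by (apply hl; exists y; split; [lra|reflexivity]).
    assert (f y <= f x0) by (apply hdec; lra).
    apply Rabs_def1; lra.
Qed.

Lemma increasing_bounded_below_has_right_limit (f : R -> R) (a b lb : R) : a < b ->
  (forall x y, a < x -> x < y -> f x <= f y) -> (forall x, a < x <= b -> lb <= f x) ->
  exists L, filterlim f (at_right a) (locally L).
Proof.
  intros hab hinc hlb.
  destruct (glb_approx (fun z => exists x, a < x <= b /\ z = f x) (f b) lb)
    as [l [hl happrox]].
  - exists b. split; [lra|reflexivity].
  - intros z [x [hx ->]]. auto.
  - exists l. apply filterlim_locally. intros eps.
    destruct (happrox eps (cond_pos eps)) as [_ [[x0 [hx0 ->]] hlt]].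
    exists (mkposreal (x0 - a) ltac:(lra)).
    intros y hy hay. change (Rabs (y - a) < x0 - a) in hy.
    apply Rabs_lt_between in hy.
    assert (l <= f y) by (apply hl; exists y; split; [lra|reflexivity]).
    assert (f y <= f x0) by (apply hinc; lra).
    change (Rabs (f y - l) < eps). apply Rabs_def1; lra.
Qed.

Lemma sqr_mul_sign (b x : R) : b * b = 1 -> (b * x) ^ 2 = x ^ 2.
Proof. intros hb. replace ((b * x) ^ 2) with (b * b * x ^ 2) by ring. rewrite hb. ring. Qed.

Definition phase_denom (m K H b r : R) : R :=
  sqrt (Pfun m K H r) * (sqrt (Pfun m K H r) - b * vfun K H r).

Section CMCSlicing.

Variables m K H : R.
Hypothesis hm : 0 < m.

Lemma sqrt_Pfun_sq (r : R) : 2 * m < r ->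
  0 < sqrt (Pfun m K H r) /\
  sqrt (Pfun m K H r) * sqrt (Pfun m K H r) = vfun K H r ^ 2 + (r - 2 * m) * r ^ 3.
Proof.
  intros hr.
  assert (hP : Pfun m K H r = vfun K H r ^ 2 + (r - 2 * m) * r ^ 3)
    by (unfold Pfun; field; lra).
  assert (0 < (r - 2 * m) * r ^ 3) by (apply Rmult_lt_0_compat; [lra|apply pow_lt; lra]).
  assert (0 <= vfun K H r ^ 2) by apply pow2_ge_0.
  rewrite hP. split; [apply sqrt_lt_R0; lra|apply sqrt_sqrt; lra].
Qed.

Lemma sqrt_Pfun_gt (b r : R) : b * b = 1 -> 2 * m < r ->
  b * vfun K H r < sqrt (Pfun m K H r).
Proof.
  intros hb hr. destruct (sqrt_Pfun_sq r hr) as [hq hqq].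
  set (q := sqrt _) in *. set (v := vfun K H r) in *.
  assert (0 < (r - 2 * m) * r ^ 3) by (apply Rmult_lt_0_compat; [lra|apply pow_lt; lra]).
  assert (hsq := sqr_mul_sign b v hb).
  nra.
Qed.

Lemma phase_denom_pos (b r : R) : b * b = 1 -> 2 * m < r -> 0 < phase_denom m K H b r.
Proof.
  intros hb hr. unfold phase_denom.
  apply Rmult_lt_0_compat; [apply sqrt_Pfun_sq, hr|].
  apply Rlt_0_minus, sqrt_Pfun_gt; assumption.
Qed.

Lemma phase_denom_twice (b r : R) : b * b = 1 -> 2 * m < r ->
  2 * phase_denom m K H b r
  = (sqrt (Pfun m K H r) - b * vfun K H r) ^ 2 + (r - 2 * m) * r ^ 3.
Proof.
  intros hb hr. destruct (sqrt_Pfun_sq r hr) as [_ hqq]. unfold phase_denom.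
  set (q := sqrt _) in *. set (v := vfun K H r) in *.
  replace ((q - b * v) ^ 2) with (q * q - 2 * b * v * q + (b * b) * v ^ 2) by ring.
  replace (2 * (q * (q - b * v))) with (2 * (q * q) - 2 * b * v * q) by ring.
  rewrite hb, hqq. ring.
Qed.

Lemma Derive_wave_phase (b : R) (σ : R -> R) (r : R) :
  K <> 0 -> b * b = 1 -> wave_phase_solution m K H b σ -> 2 * m < r ->
  Derive σ r = K * b * r ^ 4 / (3 * phase_denom m K H b r).
Proof.
  intros hK hb hσ hr.
  destruct (hσ r hr) as [_ heq].
  assert (hQ := phase_denom_pos b r hb hr).
  destruct (sqrt_Pfun_sq r hr) as [hq hqq].
  unfold phase_denom in *.
  set (q := sqrt _) in *. set (v := vfun K H r) in *. set (D := Derive σ r) in *.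
  (* Multiplying by [q - b v] clears the horizon factor, since
     [(v + b q) (q - b v) = b (q^2 - v^2) = b (r - 2m) r^3]. *)
  assert (hlin : 3 * (r - 2 * m) * q * D = K * r * (v + b * q)).
  { transitivity ((1 - 2 * m / r) * (3 / K) * D * (K * r * q)); [field; lra|].
    rewrite heq. field. lra. }
  apply (Rmult_eq_reg_r (3 * (q * (q - b * v)))); [|lra].
  replace (K * b * r ^ 4 / (3 * (q * (q - b * v))) * (3 * (q * (q - b * v))))
    with (K * b * r ^ 4) by (field; split; nra).
  apply (Rmult_eq_reg_r (r - 2 * m)); [|lra].
  transitivity (K * r * (v + b * q) * (q - b * v)); [rewrite <- hlin; ring|].
  replace (K * r * (v + b * q) * (q - b * v))
    with (K * r * (b * (q * q) - b * v ^ 2 + (1 - b * b) * v * q)) by ring.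
  rewrite hqq, hb. ring.
Qed.

Lemma wave_phase_increasing (b : R) (σ : R -> R) :
  b * b = 1 -> wave_phase_solution m K H b σ -> 0 < K * b ->
  forall x y, 2 * m < x -> x < y -> σ x < σ y.
Proof.
  intros hb hσ hKb. apply Derive_pos_strictly_increasing.
  intros r hr. split; [apply (hσ r hr)|].
  rewrite (Derive_wave_phase b σ r); try assumption.
  - apply Rdiv_lt_0_compat; [apply Rmult_lt_0_compat; [lra|apply pow_lt; lra]|].
    assert (hQ := phase_denom_pos b r hb hr). lra.
  - intros ->. lra.
Qed.

Lemma wave_phase_decreasing (b : R) (σ : R -> R) :
  b * b = 1 -> wave_phase_solution m K H b σ -> K * b < 0 ->
  forall x y, 2 * m < x -> x < y -> σ y < σ x.
Proof.
  intros hb hσ hKb. apply Derive_neg_strictly_decreasing.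
  intros r hr. split; [apply (hσ r hr)|].
  rewrite (Derive_wave_phase b σ r); try assumption.
  - assert (hQ := phase_denom_pos b r hb hr).
    assert (0 < r ^ 4) by (apply pow_lt; lra).
    apply Rdiv_neg_pos; [nra|lra].
  - intros ->. lra.
Qed.

Lemma phase_denom_ge_horizon_distance (b r : R) : b * b = 1 -> 2 * m < r ->
  (r - 2 * m) * r ^ 3 <= 2 * phase_denom m K H b r.
Proof.
  intros hb hr. rewrite (phase_denom_twice b r hb hr).
  assert (0 <= (sqrt (Pfun m K H r) - b * vfun K H r) ^ 2) by apply pow2_ge_0. lra.
Qed.

Lemma phase_denom_ge_vfun_sq (b r : R) : b * b = 1 -> 2 * m < r ->
  b * vfun K H r <= 0 -> 2 * vfun K H r ^ 2 <= phase_denom m K H b r.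
Proof.
  intros hb hr hbv.
  assert (hgap : - b * vfun K H r < sqrt (Pfun m K H r))
    by (apply sqrt_Pfun_gt; [lra|exact hr]).
  assert (htwice := phase_denom_twice b r hb hr).
  assert (0 < (r - 2 * m) * r ^ 3) by (apply Rmult_lt_0_compat; [lra|apply pow_lt; lra]).
  set (q := sqrt _) in *. set (v := vfun K H r) in *.
  assert (hsq := sqr_mul_sign b v hb).
  nra.
Qed.

Lemma phase_denom_le_horizon_distance (b r : R) : b * b = 1 -> 2 * m < r ->
  0 <= b * vfun K H r -> phase_denom m K H b r <= (r - 2 * m) * r ^ 3.
Proof.
  intros hb hr hbv.
  assert (hgap := sqrt_Pfun_gt b r hb hr).
  assert (htwice := phase_denom_twice b r hb hr).
  unfold phase_denom in *. set (q := sqrt _) in *. set (v := vfun K H r) in *.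
  assert ((q - b * v) ^ 2 <= q * (q - b * v)) by nra.
  lra.
Qed.

Lemma phase_denom_le_twice_Pfun (b r : R) : b * b = 1 -> 2 * m < r ->
  phase_denom m K H b r <= 2 * (vfun K H r ^ 2 + (r - 2 * m) * r ^ 3).
Proof.
  intros hb hr.
  assert (hgap : - b * vfun K H r < sqrt (Pfun m K H r))
    by (apply sqrt_Pfun_gt; [lra|exact hr]).
  destruct (sqrt_Pfun_sq r hr) as [hq hqq].
  unfold phase_denom. set (q := sqrt _) in *. set (v := vfun K H r) in *.
  nra.
Qed.

Lemma phase_denom_bounded_above (b R0 : R) : b * b = 1 -> 2 * m < R0 ->
  exists B, 0 < B /\
    forall r, 2 * m < r -> r <= R0 -> phase_denom m K H b r <= B.
Proof.
  intros hb hR0.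
  exists (2 * (2 * (K ^ 2 * (R0 ^ 3) ^ 2 / 9 + H ^ 2) + R0 ^ 4)). split.
  - assert (0 < R0 ^ 4) by (apply pow_lt; lra).
    assert (0 <= K ^ 2 * (R0 ^ 3) ^ 2 / 9 + H ^ 2) by nra.
    lra.
  - intros r hr hrR0.
    apply (Rle_trans _ _ _ (phase_denom_le_twice_Pfun b r hb hr)).
    assert (hr3 : 0 <= r ^ 3 <= R0 ^ 3) by (split; [apply pow_le|apply pow_incr]; lra).
    assert (hv : vfun K H r ^ 2 <= 2 * (K ^ 2 * (R0 ^ 3) ^ 2 / 9 + H ^ 2)).
    { unfold vfun.
      assert (K ^ 2 * (r ^ 3) ^ 2 <= K ^ 2 * (R0 ^ 3) ^ 2)
        by (apply Rmult_le_compat_l; [apply pow2_ge_0|apply pow_incr; lra]).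
      assert (0 <= (K * r ^ 3 / 3 + H) ^ 2) by apply pow2_ge_0.
      nra. }
    assert ((r - 2 * m) * r ^ 3 <= R0 * R0 ^ 3) by (apply Rmult_le_compat; lra).
    replace (R0 ^ 4) with (R0 * R0 ^ 3) by ring.
    lra.
Qed.

Section SignOfK.

Variable s : R.
Hypothesis hs : s * s = 1.
Hypothesis hKs : 0 < K * s.

Let hK : K <> 0.
Proof. intros ->. lra. Qed.

Lemma outgoing_Derive_lower_bound (σ : R -> R) (r : R) :
  wave_phase_solution m K H (- s) σ -> 2 * m + 1 <= r -> 6 * Rabs H <= K * s * r ->
  - 6 / (K * s * r ^ 2) <= Derive σ r.
Proof.
  intros hσ hr hHr.
  assert (hss : - s * - s = 1) by lra.
  assert (hr2m : 2 * m < r) by lra.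
  assert (hsH : s * H <= Rabs H).
  { assert (habs : Rabs s = 1)
      by (destruct (Rcase_abs s); [rewrite Rabs_left|rewrite Rabs_right]; nra).
    rewrite <- (Rmult_1_l (Rabs H)), <- habs, <- Rabs_mult. apply Rle_abs. }
  assert (hr3 : 0 < r ^ 3) by (apply pow_lt; lra).
  assert (hsv : K * s * r ^ 3 / 6 <= s * vfun K H r).
  { unfold vfun. assert (r <= r ^ 3) by nra. nra. }
  assert (hQ : 2 * vfun K H r ^ 2 <= phase_denom m K H (- s) r)
    by (apply phase_denom_ge_vfun_sq; [exact hss|exact hr2m|nra]).
  assert (hQpos := phase_denom_pos (- s) r hss hr2m).
  rewrite (Derive_wave_phase (- s) σ r hK hss hσ hr2m).
  set (Q := phase_denom m K H (- s) r) in *. set (v := vfun K H r) in *.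
  set (k := K * s) in *.
  assert (hv := sqr_mul_sign s v hs).
  assert (hbound : k * k * (r ^ 3 * r ^ 3) <= 18 * Q).
  { assert (hk3 : 0 <= k * r ^ 3 / 6) by (apply Rmult_le_pos; [apply Rmult_le_pos|]; lra).
    assert (k * r ^ 3 / 6 * (k * r ^ 3 / 6) <= s * v * (s * v))
      by (apply Rmult_le_compat; lra).
    nra. }
  replace (K * - s * r ^ 4 / (3 * Q)) with (- (k * r ^ 4 / (3 * Q))) by (unfold k; field; lra).
  assert (hkr2 : 0 < k * r ^ 2) by (apply Rmult_lt_0_compat; [lra|apply pow_lt; lra]).
  replace (- 6 / (k * r ^ 2)) with (- (6 / (k * r ^ 2))) by (field; lra).
  apply Ropp_le_contravar.
  apply Rle_div_l; [lra|].
  replace (6 / (k * r ^ 2) * (3 * Q)) with (18 * Q / (k * r ^ 2)) by (field; lra).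
  apply (Rle_div_r _ _ _ hkr2).
  replace (k * r ^ 4 * (k * r ^ 2)) with (k * k * (r ^ 3 * r ^ 3)) by ring.
  exact hbound.
Qed.

Lemma outgoing_phase_has_limit (σ : R -> R) :
  wave_phase_solution m K H (- s) σ -> exists L, is_lim σ p_infty (Finite L).
Proof.
  intros hσ.
  assert (hss : - s * - s = 1) by lra.
  set (R1 := Rmax (2 * m + 1) (6 * Rabs H / (K * s))).
  assert (hR1 : 2 * m + 1 <= R1) by apply Rmax_l.
  set (g := fun z => 6 / (K * s * z)).
  apply (decreasing_bounded_below_has_limit σ R1 (σ R1 - g R1)).
  - intros x y hx hxy. left.
    apply (wave_phase_decreasing (- s) σ hss hσ); lra.
  - intros y hy.
    assert (hincr : g y - g R1 <= σ y - σ R1).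
    { apply (increment_le_of_is_derive_le σ g (Derive σ) (fun z => - 6 / (K * s * z ^ 2)));
        [exact hy|].
      intros z hz. split; [|split].
      - apply Derive_correct, (hσ z). lra.
      - unfold g. auto_derive; [nra|]. field. nra.
      - apply outgoing_Derive_lower_bound; [exact hσ|lra|].
        rewrite (Rmult_comm (K * s) z). apply (Rle_div_l _ _ _ hKs).
        apply (Rle_trans _ R1); [apply Rmax_r|lra]. }
    assert (0 < g y) by (apply Rdiv_lt_0_compat; nra).
    lra.
Qed.

Lemma shift_at_horizon : s * vfun K H (2 * m) = K * s * (8 * m ^ 3 - 3 * H / K) / 3.
Proof. unfold vfun. field. exact hK. Qed.

Lemma shift_increment (r : R) :
  s * vfun K H r = s * vfun K H (2 * m) + K * s * (r ^ 3 - (2 * m) ^ 3) / 3.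
Proof. unfold vfun. field. Qed.

Lemma ingoing_Derive_ge_inverse_distance (σ : R -> R) (r : R) :
  3 * H / K <= 8 * m ^ 3 -> wave_phase_solution m K H s σ -> 2 * m < r ->
  2 * m * (K * s) / (3 * (r - 2 * m)) <= Derive σ r.
Proof.
  intros hH hσ hr.
  assert (hsv : 0 <= s * vfun K H r).
  { rewrite shift_increment, shift_at_horizon.
    assert ((2 * m) ^ 3 <= r ^ 3) by (apply pow_incr; lra).
    assert (0 <= K * s * (8 * m ^ 3 - 3 * H / K)) by (apply Rmult_le_pos; lra).
    assert (0 <= K * s * (r ^ 3 - (2 * m) ^ 3)) by (apply Rmult_le_pos; lra).
    lra. }
  assert (hQ := phase_denom_le_horizon_distance s r hs hr hsv).
  assert (hQpos := phase_denom_pos s r hs hr).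
  rewrite (Derive_wave_phase s σ r hK hs hσ hr).
  set (Q := phase_denom m K H s r) in *.
  assert (hr3 : 0 < r ^ 3) by (apply pow_lt; lra).
  assert (h3Q : 3 * Q > 0) by lra.
  apply (Rle_div_r _ _ _ h3Q).
  replace (2 * m * (K * s) / (3 * (r - 2 * m)) * (3 * Q))
    with (2 * m * (K * s) * (Q / (r - 2 * m))) by (field; lra).
  assert (Q / (r - 2 * m) <= r ^ 3) by (apply Rle_div_l; [lra|]; lra).
  assert (0 <= Q / (r - 2 * m)) by (apply Rlt_le, Rdiv_lt_0_compat; lra).
  assert (2 * m * (K * s) * (Q / (r - 2 * m)) <= r * (K * s) * r ^ 3)
    by (apply Rmult_le_compat; [nra|lra|nra|lra]).
  lra.
Qed.

Lemma naked_shift_reversal_of_bounded_Derive (σ : R -> R) :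
  wave_phase_solution m K H s σ ->
  (forall R0, 2 * m < R0 ->
     exists c C : R, 0 < c /\
       forall r, 2 * m < r -> r <= R0 ->
         c <= Rabs (Derive σ r) /\ Rabs (Derive σ r) <= C) ->
  3 * H / K > 8 * m ^ 3.
Proof.
  intros hσ hbd. apply Rnot_le_lt. intros hH.
  destruct (hbd (2 * m + 1) ltac:(lra)) as [c [C [_ hcC]]].
  assert (hC1 : 0 < Rabs C + 1) by (assert (0 <= Rabs C) by apply Rabs_pos; lra).
  set (e := Rmin 1 (2 * m * (K * s) / (3 * (Rabs C + 1)))).
  assert (he0 : 0 < e) by (apply Rmin_glb_lt; [lra|apply Rdiv_lt_0_compat; nra]).
  assert (he1 : e <= 1) by apply Rmin_l.
  assert (heC : Rabs C + 1 <= 2 * m * (K * s) / (3 * e)).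
  { assert (h3e : 3 * e > 0) by lra.
    assert (h3C : 3 * (Rabs C + 1) > 0) by lra.
    apply (Rle_div_r _ _ _ h3e).
    assert (hemin : e <= 2 * m * (K * s) / (3 * (Rabs C + 1))) by apply Rmin_r.
    apply (Rle_div_r _ _ _ h3C) in hemin. lra. }
  destruct (hcC (2 * m + e) ltac:(lra) ltac:(lra)) as [_ hDC].
  assert (hD := ingoing_Derive_ge_inverse_distance σ (2 * m + e) hH hσ ltac:(lra)).
  replace (2 * m + e - 2 * m) with e in hD by ring.
  assert (Derive σ (2 * m + e) <= Rabs (Derive σ (2 * m + e))) by apply Rle_abs.
  assert (C <= Rabs C) by apply Rle_abs.
  lra.
Qed.

Lemma phase_denom_bounded_below (R0 : R) :
  3 * H / K > 8 * m ^ 3 -> 2 * m < R0 ->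
  exists Q0, 0 < Q0 /\
    forall r, 2 * m < r -> r <= R0 -> Q0 <= phase_denom m K H s r.
Proof.
  intros hH hR0.
  set (a := - (s * vfun K H (2 * m))).
  assert (ha : 0 < a).
  { unfold a. rewrite shift_at_horizon.
    assert (0 < K * s * (3 * H / K - 8 * m ^ 3)) by (apply Rmult_lt_0_compat; lra).
    lra. }
  set (δ := a / (2 * (K * s) * R0 ^ 2)).
  assert (hR02 : 0 < R0 ^ 2) by (apply pow_lt; lra).
  assert (hδ : 0 < δ) by (apply Rdiv_lt_0_compat; [lra|]; nra).
  assert (hm3 : 0 < (2 * m) ^ 3) by (apply pow_lt; lra).
  exists (Rmin (a ^ 2 / 2) (δ * (2 * m) ^ 3 / 2)). split.
  - apply Rmin_glb_lt; [|nra]. assert (0 < a ^ 2) by (apply pow_lt; lra). lra.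
  - intros r hr hrR0.
    assert (hw : - (s * vfun K H r) = a - K * s * (r ^ 3 - (2 * m) ^ 3) / 3)
      by (rewrite shift_increment; unfold a; ring).
    (* Either the shift [- s v] is still at least [a/2], or [r] is at distance [>= δ]
       from the horizon. *)
    destruct (Rle_lt_dec (a / 2) (- (s * vfun K H r))) as [hfar|hnear].
    + apply (Rle_trans _ (a ^ 2 / 2)); [apply Rmin_l|].
      assert (hQ := phase_denom_ge_vfun_sq s r hs hr ltac:(lra)).
      assert (hv := sqr_mul_sign s (vfun K H r) hs).
      nra.
    + apply (Rle_trans _ (δ * (2 * m) ^ 3 / 2)); [apply Rmin_r|].
      assert (hQ := phase_denom_ge_horizon_distance s r hs hr).
      assert (hcube : r ^ 3 - (2 * m) ^ 3 <= 3 * R0 ^ 2 * (r - 2 * m)).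
      { replace (r ^ 3 - (2 * m) ^ 3)
          with ((r - 2 * m) * (r ^ 2 + 2 * m * r + (2 * m) ^ 2)) by ring.
        rewrite (Rmult_comm (3 * R0 ^ 2)).
        apply Rmult_le_compat_l; [lra|nra]. }
      assert (hdist : δ <= r - 2 * m).
      { apply Rle_div_l; [nra|].
        assert (K * s * (r ^ 3 - (2 * m) ^ 3) <= K * s * (3 * R0 ^ 2 * (r - 2 * m)))
          by (apply Rmult_le_compat_l; lra).
        lra. }
      assert ((2 * m) ^ 3 <= r ^ 3) by (apply pow_incr; lra).
      assert (δ * (2 * m) ^ 3 <= (r - 2 * m) * r ^ 3) by (apply Rmult_le_compat; lra).
      lra.
Qed.

Lemma ingoing_Derive_bounds (σ : R -> R) :
  3 * H / K > 8 * m ^ 3 -> wave_phase_solution m K H s σ ->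
  forall R0, 2 * m < R0 ->
    exists c C : R, 0 < c /\
      forall r, 2 * m < r -> r <= R0 ->
        c <= Rabs (Derive σ r) /\ Rabs (Derive σ r) <= C.
Proof.
  intros hH hσ R0 hR0.
  destruct (phase_denom_bounded_above s R0 hs hR0) as [B [hB hQB]].
  destruct (phase_denom_bounded_below R0 hH hR0) as [Q0 [hQ0 hQ0Q]].
  assert (hm4 : 0 < (2 * m) ^ 4) by (apply pow_lt; lra).
  exists (K * s * (2 * m) ^ 4 / (3 * B)), (K * s * R0 ^ 4 / (3 * Q0)). split.
  - apply Rdiv_lt_0_compat; [apply Rmult_lt_0_compat|]; lra.
  - intros r hr hrR0.
    specialize (hQB r hr hrR0). specialize (hQ0Q r hr hrR0).
    assert (hQ := phase_denom_pos s r hs hr).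
    assert (hr4 : (2 * m) ^ 4 <= r ^ 4 <= R0 ^ 4) by (split; apply pow_incr; lra).
    rewrite (Derive_wave_phase s σ r hK hs hσ hr).
    set (Q := phase_denom m K H s r) in *.
    rewrite Rabs_pos_eq
      by (apply Rlt_le, Rdiv_lt_0_compat; [apply Rmult_lt_0_compat|]; lra).
    assert (hm4K : 0 <= K * s * (2 * m) ^ 4) by (apply Rmult_le_pos; lra).
    unfold Rdiv. split; apply Rmult_le_compat.
    + exact hm4K.
    + apply Rlt_le, Rinv_0_lt_compat. lra.
    + apply Rmult_le_compat_l; lra.
    + apply Rinv_le_contravar; lra.
    + apply Rmult_le_pos; lra.
    + apply Rlt_le, Rinv_0_lt_compat. lra.
    + apply Rmult_le_compat_l; lra.
    + apply Rinv_le_contravar; lra.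
Qed.

Lemma ingoing_phase_has_right_limit (σ : R -> R) :
  wave_phase_solution m K H s σ ->
  (forall R0, 2 * m < R0 ->
     exists c C : R, 0 < c /\
       forall r, 2 * m < r -> r <= R0 ->
         c <= Rabs (Derive σ r) /\ Rabs (Derive σ r) <= C) ->
  exists L, filterlim σ (at_right (2 * m)) (locally L).
Proof.
  intros hσ hbd.
  destruct (hbd (2 * m + 1) ltac:(lra)) as [c [C [_ hcC]]].
  apply (increasing_bounded_below_has_right_limit σ (2 * m) (2 * m + 1) (σ (2 * m + 1) - C));
    [lra| |].
  - intros x y hx hxy. left. apply (wave_phase_increasing s σ hs hσ hKs); lra.
  - intros x hx.
    assert (hincr : σ (2 * m + 1) - σ x <= C * (2 * m + 1) - C * x).
    { apply (increment_le_of_is_derive_le (fun z => C * z) σ (fun _ => C) (Derive σ)); [lra|].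
      intros z hz. split; [|split].
      - auto_derive; [exact I|ring].
      - apply Derive_correct, (hσ z). lra.
      - destruct (hcC z ltac:(lra) ltac:(lra)) as [_ hz_le].
        apply (Rle_trans _ _ _ (Rle_abs _) hz_le). }
    assert (hC : 0 <= C).
    { destruct (hcC (2 * m + 1) ltac:(lra) ltac:(lra)) as [_ hle].
      apply (Rle_trans _ _ _ (Rabs_pos _) hle). }
    nra.
Qed.

End SignOfK.

End CMCSlicing.

Theorem theorem1 (m K H bp bm : R) (sp sm : R -> R)
  (hm : 0 < m) (hK : K <> 0)
  (hb : (K < 0 /\ bp = 1 /\ bm = -1) \/ (0 < K /\ bp = -1 /\ bm = 1))
  (hsp : wave_phase_solution m K H bp sp)
  (hsm : wave_phase_solution m K H bm sm) :
  (strictly_monotonic_on_gt (2 * m) sp /\ strictly_monotonic_on_gt (2 * m) sm) /\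
  (exists L : R, is_lim sp p_infty (Finite L)) /\
  (((exists L : R, filterlim sm (at_right (2 * m)) (locally L)) /\
    (forall R0, 2 * m < R0 ->
       exists c C : R, 0 < c /\
         forall r, 2 * m < r -> r <= R0 ->
           c <= Rabs (Derive sm r) /\ Rabs (Derive sm r) <= C))
   <-> 3 * H / K > 8 * m ^ 3).
Proof.
  assert (hs : bm * bm = 1) by (destruct hb as [[_ [_ ->]]|[_ [_ ->]]]; ring).
  assert (hps : - bm * - bm = 1) by (rewrite <- hs; ring).
  assert (hKs : 0 < K * bm) by (destruct hb as [[? [_ ->]]|[? [_ ->]]]; lra).
  assert (hbp : bp = - bm) by (destruct hb as [[_ [-> ->]]|[_ [-> ->]]]; ring).
  subst bp.
  split; [split|split].
  - right. apply (wave_phase_decreasing m K H hm (- bm) sp hps hsp). lra.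
  - left. exact (wave_phase_increasing m K H hm bm sm hs hsm hKs).
  - exact (outgoing_phase_has_limit m K H hm bm hs hKs sp hsp).
  - split.
    + intros [_ hbd]. exact (naked_shift_reversal_of_bounded_Derive m K H hm bm hs hKs sm hsm hbd).
    + intros hH.
      assert (hbd := ingoing_Derive_bounds m K H hm bm hs hKs sm hH hsm).
      split; [exact (ingoing_phase_has_right_limit m K H hm bm hs hKs sm hsm hbd)|exact hbd].
Qed.
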